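(* For every $d\in\mathbb{N}$, the cones $\mathfrak{P}_{2d}$ and $\mathfrak{S}_{2d}$ are full-dimensional cones in $\mathbb{R}^{\pi(2d)}$.
   Context: For $n\ge 1$, $i\ge1$ let $p_i^{(n)}=\frac1n(x_1^i+\dots+x_n^i)$, and for a partition $\lambda=(\lambda_1,\dots,\lambda_l)$ of $k$ (weakly decreasing positive integers summing to $k$) let $p^{(n)}_\lambda=\prod_i p^{(n)}_{\lambda_i}$. $\pi(k)$ is the number of partitions of $k$. For $n\ge 2d$, $\{p^{(n)}_\lambda:\lambda\vdash 2d\}$ is a basis of the space $H^S_{n,2d}$ of symmetric forms of degree $2d$ in $n$ variables, which identifies $H^S_{n,2d}$ with $\mathbb{R}^{\pi(2d)}$. Define $\mathfrak{P}_{2d}$ (resp. $\mathfrak{S}_{2d}$) as the set of $(c_\lambda)_{\lambda\vdash 2d}\in\mathbb{R}^{\pi(2d)}$ such that $\sum_\lambda c_\lambda p^{(n)}_\lambda$ is a nonnegative form (resp. a sum of squares of real forms) for every $n\ge 2d$. *)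

From HB Require Import structures.
From mathcomp Require Import all_boot all_order all_algebra.
From mathcomp Require Import reals.
From mathcomp Require Import mpoly.
Set Implicit Arguments. Unset Strict Implicit. Unset Printing Implicit Defensive.
Import Order.TTheory GRing.Theory Num.Theory.
Local Open Scope ring_scope.

Definition is_partition (k : nat) (l : seq nat) : bool :=
  [&& sorted geq l, all (fun x => 0 < x)%N l & sumn l == k].

Fixpoint cand_seqs (len k : nat) : seq (seq nat) :=
  if len is len'.+1 then
    [::] :: [seq x :: s | x <- iota 1 k, s <- cand_seqs len' k]
  else [:: [::]].

(* duplicate-free enumeration of the partitions of k (every partition of k has
   length <= k and parts in {1,...,k}) *)
Definition partitions (k : nat) : seq (seq nat) :=
  undup [seq l <- cand_seqs k k | is_partition k l].

Definition npart (k : nat) : nat := size (partitions k).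

(* the partition indexing coordinate i of R^{pi(k)} *)
Definition part_of (k : nat) (i : 'I_(npart k)) : seq nat :=
  nth [::] (partitions k) i.

Definition psum (R : realType) (n i : nat) : {mpoly R[n]} :=
  (n%:R)^-1 *: \sum_(j < n) ('X_j) ^+ i.

Definition ppart (R : realType) (n : nat) (l : seq nat) : {mpoly R[n]} :=
  \prod_(i <- l) psum R n i.

Definition sym_form (R : realType) (k n : nat) (c : 'rV[R]_(npart k))
  : {mpoly R[n]} :=
  \sum_(i < npart k) c 0 i *: ppart R n (part_of i).

Definition nonneg_form (R : realType) (n : nat) (f : {mpoly R[n]}) : Prop :=
  forall x : 'I_n -> R, 0 <= f.@[x].

Definition sos_form (R : realType) (n : nat) (f : {mpoly R[n]}) : Prop :=
  exists s : seq {mpoly R[n]},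
    (forall q, q \in s -> exists e : nat, q \is e.-homog)
    /\ f = \sum_(q <- s) q ^+ 2.

(* P_{2d}: c such that sum c_lambda p_lambda^{(n)} is nonnegative for all n >= 2d
   (n >= 1 is a standing assumption of the context). *)
Definition Pcone (R : realType) (d : nat) (c : 'rV[R]_(npart d.*2)) : Prop :=
  forall n : nat, (1 <= n)%N -> (d.*2 <= n)%N -> nonneg_form (sym_form n c).

Definition Scone (R : realType) (d : nat) (c : 'rV[R]_(npart d.*2)) : Prop :=
  forall n : nat, (1 <= n)%N -> (d.*2 <= n)%N -> sos_form (sym_form n c).

Definition is_convex_cone (R : realType) (m : nat) (K : 'rV[R]_m -> Prop) : Prop :=
  [/\ K 0,
      (forall u v, K u -> K v -> K (u + v)) &
      (forall (a : R) u, 0 <= a -> K u -> K (a *: u))].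

(* K is full-dimensional: it has nonempty interior in R^m (an open sup-norm
   ball around some point is contained in K). *)
Definition full_dimensional (R : realType) (m : nat) (K : 'rV[R]_m -> Prop) : Prop :=
  exists c0 : 'rV[R]_m, exists2 e : R, 0 < e &
    forall c : 'rV[R]_m, (forall i : 'I_m, `|c 0 i - c0 0 i| < e) -> K c.

Arguments Pcone R d c : clear implicits.
Arguments Scone R d c : clear implicits.

From HB Require Import structures.
From mathcomp Require Import all_boot all_order all_algebra.
From mathcomp Require Import reals.
From mathcomp Require Import mpoly.
From mathcomp Require Import zify ring lra.
Set Implicit Arguments. Unset Strict Implicit. Unset Printing Implicit Defensive.
Import Order.TTheory GRing.Theory Num.Theory.
Local Open Scope ring_scope.

(* Both cones are convex since nonnegativity and being a sum of squares are
   preserved by sums and nonnegative scalings, and S_{2d} is contained in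
   P_{2d}; so it suffices to find an interior point of S_{2d}.  Split each
   partition lambda of 2d as lambda_i = a_i + b_i with sum a = sum b = d, and
   let alpha = 2a, beta = 2b.  Expanding products of power sums gives Gram
   representations p_lambda = w sum_I A_I B_I, p_alpha = w sum_I A_I^2 and
   p_beta = w sum_I B_I^2 with forms A_I, B_I, hence
   (p_alpha + p_beta)/2 + delta p_lambda
     = w/4 ((1 + delta) sum (A_I + B_I)^2 + (1 - delta) sum (A_I - B_I)^2)
   is a sum of squares for |delta| <= 1.  Summing over lambda, the point
   c0 = sum_lambda (e_alpha + e_beta)/2 has the unit sup-norm ball in S_{2d}. *)

(** * Partitions *)

(* [cut_parts r s] splits every entry of [s] as x = y + z, greedily putting
   the first [r] units of mass into the [y]'s. *)
Fixpoint cut_parts (r : nat) (s : seq nat) : seq (nat * nat) :=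
  match s with
  | [::] => [::]
  | x :: s' => (minn x r, x - minn x r)%N :: cut_parts (r - minn x r) s'
  end.

Lemma cut_parts_add r s : [seq (p.1 + p.2)%N | p <- cut_parts r s] = s.
Proof. by elim: s r => [|x s IH] r //=; rewrite IH; congr (_ :: _); lia. Qed.

Lemma sumn_cut_parts_fst r s :
  sumn [seq p.1 | p <- cut_parts r s] = minn r (sumn s).
Proof. elim: s r => [|x s IH] r /=; first lia. by rewrite IH; lia. Qed.

Lemma sumn_cut_parts_snd r s :
  sumn [seq p.2 | p <- cut_parts r s] = (sumn s - minn r (sumn s))%N.
Proof.
elim: s r => [|x s IH] r //=.
by have := sumn_cut_parts_fst (r - minn x r) s; rewrite IH; lia.
Qed.

Lemma sumn_map_double T (f : T -> nat) s :
  sumn [seq (f x).*2 | x <- s] = (sumn [seq f x | x <- s]).*2.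
Proof. by elim: s => [|x s IH] //=; rewrite IH doubleD. Qed.

Definition partition_of (s : seq nat) : seq nat :=
  sort geq [seq x <- s | (0 < x)%N].

Definition part_index (k : nat) (s : seq nat) : nat :=
  index (partition_of s) (partitions k).

Lemma perm_partition_of s : perm_eq (partition_of s) [seq x <- s | (0 < x)%N].
Proof. by rewrite perm_sort. Qed.

Lemma sumn_filter_pos s : sumn [seq x <- s | (0 < x)%N] = sumn s.
Proof.
by elim: s => [|x s IH] //=; case: (posnP x) => [->|x_gt0] /=; rewrite ?x_gt0 /= IH.
Qed.

Lemma size_le_sumn s : all (fun x => 0 < x)%N s -> (size s <= sumn s)%N.
Proof. by elim: s => [|x s IH] //= /andP[x_gt0 /IH]; lia. Qed.

Lemma leq_sumn_mem s x : x \in s -> (x <= sumn s)%N.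
Proof. by elim: s => [|y s IH] //=; rewrite inE => /orP[/eqP->|/IH]; lia. Qed.

Lemma mem_cand_seqs len k s : (size s <= len)%N ->
  all (fun x => 0 < x <= k)%N s -> s \in cand_seqs len k.
Proof.
elim: len s => [|len IH] [|x s] //= size_s /andP[x_bd s_bd].
rewrite inE; apply/orP; right.
apply: (allpairs_f (fun x s => x :: s)); last exact: IH.
by rewrite mem_iota; lia.
Qed.

Lemma partition_of_mem k s : sumn s = k -> partition_of s \in partitions k.
Proof.
move=> sum_s; have pk := perm_partition_of s.
have sum_k : sumn (partition_of s) = k by rewrite (perm_sumn pk) sumn_filter_pos.
have pos : all (fun x => 0 < x)%N (partition_of s).
  by rewrite (perm_all _ pk) filter_all.
rewrite mem_undup mem_filter; apply/andP; split.
  rewrite /is_partition sum_k pos eqxx !andbT.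
  by apply: sort_sorted => x y; exact: leq_total.
apply: mem_cand_seqs; first by rewrite -sum_k size_le_sumn.
by apply/allP => x x_s; have := allP pos x x_s; have := leq_sumn_mem x_s; lia.
Qed.

Lemma part_index_lt k s : sumn s = k -> (part_index k s < npart k)%N.
Proof. by move=> sum_s; rewrite /part_index /npart index_mem partition_of_mem. Qed.

Lemma part_of_index k s (sum_s : sumn s = k) :
  part_of (Ordinal (part_index_lt sum_s)) = partition_of s.
Proof. by rewrite /part_of /= /part_index nth_index // partition_of_mem. Qed.

Lemma sumn_part_of k (i : 'I_(npart k)) : sumn (part_of i) = k.
Proof.
have : part_of i \in partitions k by rewrite /part_of mem_nth.
by rewrite mem_undup mem_filter => /andP[/and3P[_ _ /eqP]].
Qed.

(* The two halves alpha = 2a and beta = 2b of a partition of 2d. *)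
Definition lower_double (d : nat) (s : seq nat) : seq nat :=
  [seq p.1.*2 | p <- cut_parts d s].

Definition upper_double (d : nat) (s : seq nat) : seq nat :=
  [seq p.2.*2 | p <- cut_parts d s].

Lemma sumn_lower_double d s : sumn s = d.*2 -> sumn (lower_double d s) = d.*2.
Proof.
by move=> sum_s; rewrite sumn_map_double sumn_cut_parts_fst sum_s; congr _.*2; lia.
Qed.

Lemma sumn_upper_double d s : sumn s = d.*2 -> sumn (upper_double d s) = d.*2.
Proof.
by move=> sum_s; rewrite sumn_map_double sumn_cut_parts_snd sum_s; congr _.*2; lia.
Qed.

(** * Sums of squares of forms *)

Section SumsOfSquares.
Variables (R : realType) (n : nat).

Lemma sos_form0 : sos_form (0 : {mpoly R[n]}).
Proof. by exists [::]; rewrite big_nil. Qed.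

Lemma sos_formD (f g : {mpoly R[n]}) :
  sos_form f -> sos_form g -> sos_form (f + g).
Proof.
move=> [s1 [hom1 ->]] [s2 [hom2 ->]]; exists (s1 ++ s2); rewrite big_cat.
by split=> // q; rewrite mem_cat => /orP[/hom1|/hom2].
Qed.

Lemma sos_formZ (a : R) (f : {mpoly R[n]}) :
  0 <= a -> sos_form f -> sos_form (a *: f).
Proof.
move=> a_ge0 [s [hom ->]]; exists [seq Num.sqrt a *: q | q <- s]; split.
  by move=> q /mapP[q' /hom [e q'_hom] ->]; exists e; exact: dhomogZ.
rewrite big_map scaler_sumr; apply: eq_bigr => q _.
by rewrite exprZn sqr_sqrtr.
Qed.

Lemma sos_form_sqr e (q : {mpoly R[n]}) : q \is e.-homog -> sos_form (q ^+ 2).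
Proof.
move=> q_hom; exists [:: q]; rewrite big_seq1; split=> // q'.
by rewrite inE => /eqP ->; exists e.
Qed.

Lemma sos_form_sum (I : finType) (F : I -> {mpoly R[n]}) :
  (forall i, sos_form (F i)) -> sos_form (\sum_i F i).
Proof. by move=> sosF; apply: big_ind => //; [exact: sos_form0|exact: sos_formD]. Qed.

Lemma sos_form_nonneg (f : {mpoly R[n]}) : sos_form f -> nonneg_form f.
Proof.
move=> [s [_ ->]] x; rewrite raddf_sum /=; apply: sumr_ge0 => q _.
by rewrite mevalM sqr_ge0.
Qed.

(* The 2x2 Gram matrix [[1/2, delta/2], [delta/2, 1/2]] is psd for |delta| <= 1:
   (A^2 + B^2)/2 + delta AB = ((1 + delta)(A + B)^2 + (1 - delta)(A - B)^2)/4. *)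
Lemma sos_form_gram2 (I : finType) (w delta : R) (A B : I -> {mpoly R[n]}) e :
  0 < w -> -1 <= delta <= 1 ->
  (forall i, A i \is e.-homog) -> (forall i, B i \is e.-homog) ->
  sos_form (2^-1 *: (w *: \sum_i A i ^+ 2 + w *: \sum_i B i ^+ 2)
            + delta *: (w *: \sum_i A i * B i)).
Proof.
move=> w_gt0 /andP[delta_ge delta_le] A_hom B_hom; set c := w / 4.
have c_gt0 : 0 < c by rewrite /c divr_gt0.
have -> : 2^-1 *: (w *: \sum_i A i ^+ 2 + w *: \sum_i B i ^+ 2)
            + delta *: (w *: \sum_i A i * B i) =
          (c * (1 + delta)) *: \sum_i (A i + B i) ^+ 2 +
          (c * (1 - delta)) *: \sum_i (A i - B i) ^+ 2.
  rewrite scalerDr !scalerA !scaler_sumr -!big_split /=; apply: eq_bigr => i _.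
  have -> : 2^-1 * w = c * 2 by rewrite /c; field.
  have -> : delta * w = c * delta * 4 by rewrite /c; field.
  rewrite -!mul_mpolyC !mpolyCM ?mpolyCD ?mpolyCB ?mpolyC1 ?mpolyC_nat.
  ring.
apply: sos_formD; apply: sos_formZ.
- by apply: mulr_ge0; [exact: ltW | lra].
- by apply: sos_form_sum => i; apply: (@sos_form_sqr e); exact: dhomogD.
- by apply: mulr_ge0; [exact: ltW | lra].
- apply: sos_form_sum => i; apply: (@sos_form_sqr e).
  by apply: dhomogD; rewrite ?dhomogN.
Qed.

End SumsOfSquares.

(** * Gram representations of products of power sums *)

Section PowerSums.
Variables (R : realType) (n : nat).
Hypothesis n_gt0 : (0 < n)%N.

Lemma dhomogXn (j : 'I_n) k : ('X_j : {mpoly R[n]}) ^+ k \is k.-homog.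
Proof.
have X_hom : ('X_j : {mpoly R[n]}) \is 1.-homog by rewrite dhomogX /= mdeg1.
by have := dhomogMn k X_hom; rewrite mul1n.
Qed.

Lemma psum0 : psum R n 0 = 1.
Proof.
rewrite /psum; under eq_bigr do rewrite expr0.
rewrite sumr_const card_ord -scaler_nat scalerA mulVf ?scale1r //.
by rewrite pnatr_eq0 -lt0n.
Qed.

Lemma ppart_partition_of s : ppart R n (partition_of s) = ppart R n s.
Proof.
rewrite /ppart (perm_big _ (perm_partition_of s)) big_filter big_mkcond /=.
apply: eq_bigr => x _; case: ifP => // /negbT.
by rewrite -eqn0Ngt => /eqP ->; rewrite psum0.
Qed.

(* Expand p_{a_1+b_1} ... p_{a_m+b_m} as (1/n^m) sum over j in 'I_n^m of the
   monomials prod_i x_{j_i}^{a_i} x_{j_i}^{b_i}. *)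
Lemma prod_psum_gram (t : seq (nat * nat)) : exists (I : finType) (w : R)
    (A B : I -> {mpoly R[n]}), [/\ 0 < w,
    forall i, A i \is (sumn [seq p.1 | p <- t]).-homog,
    forall i, B i \is (sumn [seq p.2 | p <- t]).-homog,
    \prod_(p <- t) psum R n (p.1 + p.2)%N = w *: \sum_i A i * B i &
    \prod_(p <- t) psum R n p.1.*2 = w *: \sum_i A i ^+ 2 /\
    \prod_(p <- t) psum R n p.2.*2 = w *: \sum_i B i ^+ 2].
Proof.
elim: t => [|[a b] t [I [w [A [B [w_gt0 A_hom B_hom eAB [eA eB]]]]]]].
  exists 'I_1, 1, (fun=> 1), (fun=> 1); rewrite !big_nil.
  split=> //; try by move=> _; apply: dhomog1.
  1: by rewrite big_ord1 mulr1 scale1r.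
  by split; rewrite big_ord1 expr1n scale1r.
exists ('I_n * I)%type, (n%:R^-1 * w), (fun p => 'X_p.1 ^+ a * A p.2),
  (fun p => 'X_p.1 ^+ b * B p.2).
have psum_mul F (H : I -> {mpoly R[n]}) :
    (n%:R^-1 *: \sum_j F j) * (w *: \sum_i H i) =
    (n%:R^-1 * w) *: \sum_(p : 'I_n * I) F p.1 * H p.2.
  rewrite -scalerAl -scalerAr scalerA; congr (_ *: _).
  rewrite mulr_suml; under eq_bigr do rewrite mulr_sumr.
  exact: (pair_bigA _ (fun j i => F j * H i)).
split; last split.
- by apply: mulr_gt0 => //; rewrite invr_gt0 ltr0n.
- by move=> p /=; exact: dhomogM (dhomogXn _ _) (A_hom _).
- by move=> p /=; exact: dhomogM (dhomogXn _ _) (B_hom _).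
- rewrite big_cons eAB /psum /= psum_mul; congr (_ *: _).
  by apply: eq_bigr => p _; rewrite exprD mulrACA.
- rewrite big_cons eA /psum /= psum_mul; congr (_ *: _).
  by apply: eq_bigr => p _; rewrite -addnn exprD exprMn expr2.
- rewrite big_cons eB /psum /= psum_mul; congr (_ *: _).
  by apply: eq_bigr => p _; rewrite -addnn exprD exprMn expr2.
Qed.

Lemma sos_form_split_part d s (delta : R) : sumn s = d.*2 -> -1 <= delta <= 1 ->
  sos_form (2^-1 *: (ppart R n (lower_double d s) + ppart R n (upper_double d s))
            + delta *: ppart R n s).
Proof.
move=> sum_s delta_bd; set t := cut_parts d s.
have [I [w [A [B [w_gt0 A_hom B_hom eAB [eA eB]]]]]] := prod_psum_gram t.
have sum_fst : sumn [seq p.1 | p <- t] = d.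
  by rewrite sumn_cut_parts_fst sum_s; lia.
have sum_snd : sumn [seq p.2 | p <- t] = d.
  by rewrite sumn_cut_parts_snd sum_s; lia.
have -> : ppart R n s = \prod_(p <- t) psum R n (p.1 + p.2)%N.
  by rewrite /ppart -{1}(cut_parts_add d s) big_map.
rewrite /ppart /lower_double /upper_double !big_map -/t eA eB eAB.
apply: (sos_form_gram2 (e := d) w_gt0 delta_bd) => i.
  by rewrite -[X in X.-homog]sum_fst.
by rewrite -[X in X.-homog]sum_snd.
Qed.

End PowerSums.

(** * The cones *)

Section Cones.
Variable R : realType.

Lemma sym_formD k n (u v : 'rV[R]_(npart k)) :
  sym_form n (u + v) = sym_form n u + sym_form n v.
Proof. by rewrite /sym_form -big_split; apply: eq_bigr => i _; rewrite mxE scalerDl. Qed.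

Lemma sym_formZ k n (a : R) (u : 'rV[R]_(npart k)) :
  sym_form n (a *: u) = a *: sym_form n u.
Proof. by rewrite /sym_form scaler_sumr; apply: eq_bigr => i _; rewrite mxE scalerA. Qed.

Lemma sym_form0 k n : sym_form n (0 : 'rV[R]_(npart k)) = 0.
Proof. by rewrite /sym_form big1 // => i _; rewrite mxE scale0r. Qed.

Lemma sym_form_sum k n (I : finType) (F : I -> 'rV[R]_(npart k)) :
  sym_form n (\sum_i F i) = \sum_i sym_form n (F i).
Proof. by apply: big_morph; [exact: sym_formD | exact: sym_form0]. Qed.

(* the coordinate vector e_lambda of the partition lambda underlying [s] *)
Definition delta_row k (s : seq nat) : 'rV[R]_(npart k) :=
  \row_(l < npart k) ((part_index k s == l)%:R : R).

Lemma sym_form_delta_row k n s : (0 < n)%N -> sumn s = k ->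
  sym_form n (delta_row k s) = ppart R n s.
Proof.
move=> n_gt0 sum_s.
rewrite /sym_form (bigD1 (Ordinal (part_index_lt sum_s))) //= mxE eqxx scale1r.
rewrite big1 ?addr0 ?part_of_index ?ppart_partition_of // => l l_neq.
rewrite mxE; suff /negbTE -> : part_index k s != l by rewrite scale0r.
by apply: contra l_neq => /eqP e; apply/eqP/val_inj.
Qed.

Lemma Pcone_convex d : is_convex_cone (Pcone R d).
Proof.
split.
- by move=> n _ _ x; rewrite sym_form0 raddf0.
- move=> u v Pu Pv n n_ge1 n_ge x; rewrite sym_formD mevalD.
  exact: addr_ge0 (Pu n n_ge1 n_ge x) (Pv n n_ge1 n_ge x).
- move=> a u a_ge0 Pu n n_ge1 n_ge x; rewrite sym_formZ mevalZ.
  exact: mulr_ge0 a_ge0 (Pu n n_ge1 n_ge x).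
Qed.

Lemma Scone_convex d : is_convex_cone (Scone R d).
Proof.
split.
- by move=> n _ _; rewrite sym_form0; exact: sos_form0.
- move=> u v Su Sv n n_ge1 n_ge; rewrite sym_formD.
  exact: sos_formD (Su n n_ge1 n_ge) (Sv n n_ge1 n_ge).
- move=> a u a_ge0 Su n n_ge1 n_ge; rewrite sym_formZ.
  exact: sos_formZ a_ge0 (Su n n_ge1 n_ge).
Qed.

Lemma Scone_sub_Pcone d c : Scone R d c -> Pcone R d c.
Proof. by move=> Sc n n_ge1 n_ge; apply: sos_form_nonneg; exact: Sc. Qed.

Lemma full_dimensional_sub m (K K' : 'rV[R]_m -> Prop) :
  (forall c, K c -> K' c) -> full_dimensional K -> full_dimensional K'.
Proof. by move=> KK' [c0 [e e_gt0 ball_K]]; exists c0; exists e => // c /ball_K/KK'. Qed.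

Definition Scone_center d : 'rV[R]_(npart d.*2) :=
  \sum_(l < npart d.*2) 2^-1 *: (delta_row d.*2 (lower_double d (part_of l))
                                 + delta_row d.*2 (upper_double d (part_of l))).

Lemma sym_form_Scone_center d n : (0 < n)%N ->
  sym_form n (Scone_center d) = \sum_(l < npart d.*2)
    2^-1 *: (ppart R n (lower_double d (part_of l))
             + ppart R n (upper_double d (part_of l))).
Proof.
move=> n_gt0; rewrite sym_form_sum; apply: eq_bigr => l _.
have sum_l := sumn_part_of l.
by rewrite sym_formZ sym_formD !sym_form_delta_row ?sumn_lower_double ?sumn_upper_double.
Qed.

Lemma Scone_full d : full_dimensional (Scone R d).
Proof.
exists (Scone_center d); exists 1 => // c c_near n n_ge1 _.
rewrite -(subrK (Scone_center d) c) addrC sym_formD sym_form_Scone_center //.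
rewrite [sym_form n (c - _)]/sym_form -big_split /=; apply: sos_form_sum => l.
apply: sos_form_split_part => //; first exact: sumn_part_of.
by have := c_near l; rewrite !mxE ltr_norml => /andP[/ltW-> /ltW->].
Qed.

End Cones.

Theorem theorem1p2 (R : realType) (d : nat) :
  [/\ is_convex_cone (Pcone R d), full_dimensional (Pcone R d),
      is_convex_cone (Scone R d) & full_dimensional (Scone R d)].
Proof.
split; [exact: Pcone_convex | | exact: Scone_convex | exact: Scone_full].
by apply: full_dimensional_sub (Scone_full R d); exact: Scone_sub_Pcone.
Qed.
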